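(* Work in discrete time, $t, \tau \in \{0,1,2,\dots\}$. Let $S(\tau,t)$, for integers $t \ge \tau \ge 0$, be a random process with non-negative real values and $S(t,t) = 0$ for all $t \ge 0$, and write $\mathsf{M}_S(-\theta,\tau,t) = \mathsf{E}[e^{-\theta S(\tau,t)}]$ for $\theta \ge 0$. Let $\varepsilon \in (0,1]$, $\rho \in (0,1/\varepsilon]$, and for each pair $t \ge \tau \ge 0$ let $\theta(\tau,t) > 0$ be an arbitrary (deterministic) parameter. Define $$\mathcal{S}^{\varepsilon}(\tau,t) = -\frac{1}{\theta(\tau,t)}\Bigl( \ln \mathsf{M}_S(-\theta(\tau,t),\tau,t) + \rho (t-\tau) - \ln(\rho\varepsilon)\Bigr).$$ Then for every $t \ge 0$, $$\mathsf{P}\bigl[S(\tau,t) \ge \mathcal{S}^{\varepsilon}(\tau,t) \text{ for all } \tau \in \{0,1,\dots,t\}\bigr] \ge 1-\varepsilon .$$ Consequently, if $A(t)$ and $D(t)$ are (cumulative arrival and departure) processes satisfying $D(t) \ge \inf_{\tau \in [0,t]}\{A(\tau) + S(\tau,t)\}$ for all $t \ge 0$, then $\mathsf{P}\bigl[D(t) \ge \inf_{\tau \in [0,t]}\{A(\tau) + \mathcal{S}^{\varepsilon}(\tau,t)\}\bigr] \ge 1-\varepsilon$ for all $t \ge 0$.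
   Context: $S(\tau,t)$ models the (time-variant, possibly non-stationary) service offered by a system in the interval $(\tau,t]$. $A(t)$ denotes the number of bits arriving in $(0,t]$ (non-negative, non-decreasing, $A(0)=0$) and $D(t)$ the cumulative departures. The function $\mathcal{S}^{\varepsilon}$ is called a non-stationary service curve. *)

From HB Require Import structures.
From mathcomp Require Import all_boot all_order all_algebra.
From mathcomp Require Import all_classical all_reals all_analysis.
Set Implicit Arguments. Unset Strict Implicit. Unset Printing Implicit Defensive.
Import Order.TTheory GRing.Theory Num.Theory.
Local Open Scope ring_scope.

(* Moment generating function M_S(-theta, tau, t) = E[exp(-theta S(tau,t))],
   as a real number (the integrand lies in (0,1], so the expectation is finite). *)
Definition mgf_neg {d} {T : measurableType d} {R : realType}
  (P : probability T R) (S : nat -> nat -> T -> R) (theta : R) (tau t : nat) : R :=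
  fine ('E_P[fun w => expR (- theta * S tau t w)])%E.

Definition ns_service_curve {d} {T : measurableType d} {R : realType}
  (P : probability T R) (S : nat -> nat -> T -> R) (theta : nat -> nat -> R)
  (eps rho : R) (tau t : nat) : R :=
  - (theta tau t)^-1 *
    (ln (mgf_neg P S (theta tau t) tau t) + rho * (t - tau)%:R - ln (rho * eps)).

Definition inf_upto {R : realType} (t : nat) (f : nat -> R) : R :=
  \big[Order.min/f 0%N]_(tau < t.+1) f tau.

(* Each constraint [S^eps(tau, t) <= S(tau, t)] with [tau < t] fails with
   probability at most [rho eps e^{-rho (t - tau)}]: the Chernoff bound for the
   lower tail of [S(tau, t)] at the level [S^eps(tau, t)] is exactly this, the
   curve being chosen for that purpose.  The constraint for [tau = t] always
   holds since [S(t, t) = 0] and [rho eps <= 1].  A union bound and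
   [rho sum_{k >= 1} e^{-rho k} <= rho / (e^rho - 1) <= 1] give a failure
   probability of at most [eps].  The bound on the departures follows because
   [inf_tau (A tau + _)] is monotone. *)

From HB Require Import structures.
From mathcomp Require Import all_boot all_order all_algebra.
From mathcomp Require Import all_classical all_reals all_analysis.
From mathcomp Require Import measurable_realfun lra.
Import Order.TTheory GRing.Theory Num.Theory.
Set Implicit Arguments. Unset Strict Implicit. Unset Printing Implicit Defensive.
Local Open Scope ring_scope.
Local Open Scope classical_set_scope.

Section real_bounds.
Context {R : realType}.

(* Also at [M = 0], where [ln 0 = 0]. *)
Lemma expR_lnN_le1 (M : R) : 0 <= M -> M * expR (- ln M) <= 1.
Proof.
rewrite le0r => /orP[/eqP ->|M0]; first by rewrite mul0r.
by rewrite expRN lnK ?posrE // mulfV ?gt_eqF.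
Qed.

Lemma expRN_mul1D_le1 (rho : R) : expR (- rho) * (1 + rho) <= 1.
Proof.
have e1 : expR (- rho) * expR rho = 1 by rewrite -expRD addNr expR0.
by rewrite -[leRHS]e1 ler_pM2l ?expR_gt0 ?expR_ge1Dx.
Qed.

Lemma geometric_tail_le1 (rho : R) (t : nat) :
  rho * \sum_(tau < t) expR (- rho * (t - tau)%:R) <= 1.
Proof.
pose u tau := expR (- rho * (t - tau)%:R).
have step tau : (0 <= tau < t)%N -> rho * u tau <= u tau.+1 - u tau.
  move=> /andP[_ lt_tau_t]; rewrite /u -(subnSK lt_tau_t) -addn1 natrD mulrDr mulr1 expRD.
  set q := expR _; have q0 : 0 <= q := expR_ge0 _.
  have := ler_wpM2l q0 (expRN_mul1D_le1 rho); rewrite mulr1; nra.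
rewrite mulr_sumr -(big_mkord xpredT (fun tau => rho * u tau)).
apply: (le_trans (ler_sum_nat step)).
rewrite telescope_sumr // /u subnn mulr0 expR0 lerBlDr lerDl; exact: expR_ge0.
Qed.

End real_bounds.

Section measurable_sets.
Context {d} {T : measurableType d} {R : realType}.

Lemma measurable_boolset (f : T -> bool) :
  measurable_fun setT f -> measurable [set w | f w].
Proof.
move=> mf; have := mf measurableT [set true] I.
by rewrite setTI; congr measurable; apply/seteqP; split => w /=.
Qed.

Lemma measurable_inf_upto (t : nat) (F : nat -> T -> R) :
  (forall tau, measurable_fun setT (F tau)) ->
  measurable_fun setT (fun w => inf_upto t (F ^~ w)).
Proof.
move=> mF; rewrite /inf_upto; elim: (index_enum _) => [|i r IH].
  by under eq_fun do rewrite big_nil; exact: mF.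
by under eq_fun do rewrite big_cons; exact: measurable_minr.
Qed.

Lemma measurable_ltr_set (f g : T -> R) :
  measurable_fun setT f -> measurable_fun setT g -> measurable [set w | f w < g w].
Proof. by move=> mf mg; apply/measurable_boolset/measurable_fun_ltr. Qed.

Lemma measurable_ler_set (f g : T -> R) :
  measurable_fun setT f -> measurable_fun setT g -> measurable [set w | f w <= g w].
Proof. by move=> mf mg; apply/measurable_boolset/measurable_fun_ler. Qed.

End measurable_sets.

Lemma le_inf_upto {R : realType} (t : nat) (f g : nat -> R) :
  (forall tau, (tau <= t)%N -> f tau <= g tau) -> inf_upto t f <= inf_upto t g.
Proof.
move=> le_fg; apply: le_bigmin => [|i _]; last first.
  exact: le_trans (bigmin_le _ _ _) (le_fg i (ltn_ord i)).
exact: le_trans (bigmin_le _ (ord0 : 'I_t.+1) _) (le_fg 0%N (leq0n t)).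
Qed.

Section chernoff_lower_tail.
Context {d} {T : measurableType d} {R : realType} (P : probability T R).

Lemma expectation_expRN_fin_num (Y : T -> R) (th : R) :
  measurable_fun setT Y -> (forall w, 0 <= Y w) -> 0 <= th ->
  ('E_P[fun w => expR (- th * Y w)] \is a fin_num)%E.
Proof.
move=> mY Y0 th0; rewrite ge0_fin_numE; last exact: expectation_ge0.
have : ('E_P[fun w => expR (- th * Y w)] <= 'E_P[cst 1%R])%E.
  apply: expectation_le => //.
  - by apply: measurableT_comp => //; exact: measurable_funM.
  - by apply: aeW => w; rewrite -expR0 ler_expR mulNr oppr_le0 mulr_ge0.
by rewrite expectation_cst => /le_lt_trans; apply; exact: ltry.
Qed.

Lemma chernoff_lower (Y : T -> R) (th x : R) : measurable_fun setT Y -> 0 < th ->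
  (P [set w | (Y w <= x)%R] <= 'E_P[fun w => expR (- th * Y w)] * (expR (th * x))%:E)%E.
Proof.
move=> mY th0; have mNY : (fun w => - Y w) \in mfun.
  by rewrite inE; exact: measurableT_comp.
have -> : [set w | (Y w <= x)%R] = [set w | (- x <= mfun_Sub mNY w)%R].
  by apply/seteqP; split => w /=; rewrite lerN2.
have -> : (fun w => expR (- th * Y w)) = expR \o th \o* mfun_Sub mNY.
  by apply/funext => w /=; rewrite mulNr mulrC mulNr.
by have := chernoff (P := P) (mfun_Sub mNY) (- x) th0; rewrite mulrN opprK.
Qed.

End chernoff_lower_tail.

Section service_curve.
Context {d} {T : measurableType d} {R : realType} (P : probability T R).
Variables (S : nat -> nat -> T -> R) (theta : nat -> nat -> R) (eps rho : R).
Hypothesis S_meas : forall tau t, (tau <= t)%N -> measurable_fun setT (S tau t).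
Hypothesis S_ge0 : forall tau t w, (tau <= t)%N -> 0 <= S tau t w.
Hypothesis S_diag : forall t w, S t t w = 0.
Hypothesis eps_bounds : 0 < eps <= 1.
Hypothesis rho_bounds : 0 < rho <= eps^-1.
Hypothesis theta_gt0 : forall tau t, (tau <= t)%N -> 0 < theta tau t.

Local Notation curve := (ns_service_curve P S theta eps rho).

Let rho_eps_gt0 : 0 < rho * eps.
Proof.
by case/andP: eps_bounds => eps0 _; case/andP: rho_bounds => rho0 _; exact: mulr_gt0.
Qed.

Let rho_eps_le1 : rho * eps <= 1.
Proof.
case/andP: eps_bounds => eps0 _; case/andP: rho_bounds => _ rho_le.
by rewrite -(mulVf (lt0r_neq0 eps0)) ler_pM2r.
Qed.

Lemma ns_service_curve_diag_le0 t : curve t t <= 0.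
Proof.
rewrite /ns_service_curve /mgf_neg.
have -> : (fun w => expR (- theta t t * S t t w)) = cst 1.
  by apply: funext => w; rewrite S_diag mulr0 expR0.
rewrite expectation_cst /= ln1 subnn mulr0 add0r sub0r mulrNN.
by rewrite pmulr_rle0 ?invr_gt0 ?theta_gt0 // ln_le0.
Qed.

Lemma ns_service_curve_tail tau t : (tau <= t)%N ->
  (P [set w | (S tau t w < curve tau t)%R] <=
   (rho * eps * expR (- rho * (t - tau)%:R))%:E)%E.
Proof.
move=> le_tau_t; set x := curve tau t; set th := theta tau t.
have th0 : 0 < th := theta_gt0 le_tau_t.
have mS := S_meas le_tau_t.
have M_fin := expectation_expRN_fin_num P mS (fun w => S_ge0 w le_tau_t) (ltW th0).
have le_closed : (P [set w | (S tau t w < x)%R] <= P [set w | (S tau t w <= x)%R])%E.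
  apply: le_measure; last by move=> w /= /ltW.
  - by rewrite inE; exact: measurable_ltr_set.
  - by rewrite inE; exact: measurable_ler_set.
apply: (le_trans le_closed); apply: (le_trans (chernoff_lower P x mS th0)).
rewrite -(fineK M_fin) -EFinM lee_fin -/(mgf_neg P S th tau t).
set M := mgf_neg P S th tau t.
have M0 : 0 <= M by apply: fine_ge0; exact: expectation_ge0.
have -> : th * x = - ln M + (- rho * (t - tau)%:R + ln (rho * eps)).
  rewrite /x /ns_service_curve -/th -/M mulrA mulrN mulfV ?gt_eqF //; lra.
rewrite expRD mulrA expRD lnK ?posrE // mulrC [rho * eps * _]mulrC.
apply: ler_piMr; last exact: expR_lnN_le1.
by rewrite mulr_ge0 ?expR_ge0 ?(ltW rho_eps_gt0).
Qed.

(* The index [tau = t] is left out: that constraint never fails. *)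
Definition service_violation t :=
  \big[setU/set0]_(tau < t) [set w | (S tau t w < curve tau t)%R].

Lemma measurable_service_violation t : measurable (service_violation t).
Proof.
apply: bigsetU_measurable => tau _; apply: measurable_ltr_set => //.
exact/S_meas/ltnW.
Qed.

Lemma service_guaranteeE t :
  [set w | forall tau, (tau <= t)%N -> (curve tau t <= S tau t w)%R] =
  ~` service_violation t.
Proof.
rewrite /service_violation.
rewrite -(bigcup_mkord t (fun tau => [set w | (S tau t w < curve tau t)%R])).
apply/seteqP; split => w /=.
  by move=> ok [tau /= lt_tau_t]; apply/negP; rewrite -leNgt ok // ltnW.
move=> ok tau; rewrite leq_eqVlt => /orP[/eqP ->|lt_tau_t].
  by rewrite S_diag ns_service_curve_diag_le0.
by rewrite leNgt; apply/negP => bad; apply: ok; exists tau.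
Qed.

Lemma service_violation_le t : (P (service_violation t) <= eps%:E)%E.
Proof.
pose F tau := [set w | (S tau t w < curve tau t)%R].
apply: (le_trans (content_subadditive P (F := F) _ (measurable_service_violation t)
  (@subset_refl _ _))).
  by move=> tau /= lt_tau_t; apply: measurable_ltr_set => //; exact/S_meas/ltnW.
apply: (@le_trans _ _ (\sum_(tau < t) (rho * eps * expR (- rho * (t - tau)%:R))%:E)%E).
  by apply: lee_sum => tau _; apply: ns_service_curve_tail; exact: ltnW.
rewrite sumEFin lee_fin -mulr_sumr mulrAC -[leRHS]mul1r ler_wpM2r //.
  by case/andP: eps_bounds => /ltW.
exact: geometric_tail_le1.
Qed.

Lemma service_guarantee t : ((1 - eps)%:E <= P (~` service_violation t))%E.
Proof.
rewrite probability_setC ?EFinB; last exact: measurable_service_violation.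
by apply: leeB => //; exact: service_violation_le.
Qed.

End service_curve.

Theorem mainTheorem3 (d : measure_display) (T : measurableType d) (R : realType)
  (P : probability T R) (S : nat -> nat -> T -> R)
  (HSmeas : forall tau t : nat, (tau <= t)%N -> measurable_fun setT (S tau t))
  (HSnn : forall (tau t : nat) (w : T), (tau <= t)%N -> 0 <= S tau t w)
  (HS0 : forall (t : nat) (w : T), S t t w = 0)
  (eps rho : R) (Heps : 0 < eps <= 1) (Hrho : 0 < rho <= eps^-1)
  (theta : nat -> nat -> R)
  (Htheta : forall tau t : nat, (tau <= t)%N -> 0 < theta tau t) :
  (forall t : nat,
     ((1 - eps)%:E <=
      P [set w | forall tau : nat, (tau <= t)%N ->
                   (ns_service_curve P S theta eps rho tau t <= S tau t w)%R])%E)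
  /\
  (forall A D : nat -> T -> R,
     (forall t : nat, measurable_fun setT (A t)) ->
     (forall t : nat, measurable_fun setT (D t)) ->
     (forall w : T, A 0%N w = 0) ->
     (forall (t : nat) (w : T), 0 <= A t w) ->
     (forall (s t : nat) (w : T), (s <= t)%N -> A s w <= A t w) ->
     (forall (t : nat) (w : T), inf_upto t (fun tau => A tau w + S tau t w) <= D t w) ->
     forall t : nat,
       ((1 - eps)%:E <=
        P [set w | (inf_upto t (fun tau => A tau w + ns_service_curve P S theta eps rho tau t)
                   <= D t w)%R])%E).
Proof.
have guarantee t := service_guarantee P HSmeas HSnn Heps Hrho Htheta t.
have guaranteeE t := service_guaranteeE P HS0 Heps Hrho Htheta t.
split => [t|A D mA mD _ _ _ D_ge t]; first by rewrite guaranteeE.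
apply: le_trans (guarantee t) (le_measure _ _ _ _).
- by rewrite inE; apply/measurableC/measurable_service_violation.
- rewrite inE; apply: measurable_ler_set => //.
  by apply: measurable_inf_upto => tau; exact: measurable_funD.
- rewrite -guaranteeE => w /= above; apply: le_trans (D_ge t w).
  by apply: le_inf_upto => tau le_tau_t; rewrite lerD2l above.
Qed.
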